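(* Let $\mathcal{X},\mathcal{Y}$ be finite sets and $p(X,Y)$ a fully supported probability distribution on $\mathcal{X}\times\mathcal{Y}$, and let $\lambda=I(X;Y)$. Then the solutions of the IIB problem with parameter $\lambda$ are exactly the channels of the form $q(t|x,y)=\gamma(t\mid\pi(x,y))$ for a congruent channel $\gamma\in C(\{1,\dots,n\},\mathcal{T})$.
   Context: $\mathcal{T}:=\mathbb{N}$; $C(\mathcal{A},\mathcal{B})$ is the set of channels (conditional probabilities) from $\mathcal{A}$ to $\mathcal{B}$. For $\kappa\in C(\mathcal{X}\times\mathcal{Y},\mathcal{T})$ and a distribution $r$ on $\mathcal{X}\times\mathcal{Y}$, $\kappa(r)(t)=\sum_{x,y}\kappa(t|x,y)r(x,y)$; $I_\kappa(X,Y;T)$ is the mutual information under $p(x,y)\kappa(t|x,y)$; $D$ is the KL divergence. The IIB problem with parameter $\lambda\in[0,I(X;Y)]$: minimise $I_\kappa(X,Y;T)$ over $\kappa\in C(\mathcal{X}\times\mathcal{Y},\mathcal{T})$ subject to $D(\kappa(p(X,Y))\|\kappa(p(X)p(Y)))=\lambda$. The equivalence relation $(x,y)\sim(x',y')$ iff $\frac{p(x,y)}{p(x)p(y)}=\frac{p(x',y')}{p(x')p(y')}$ has classes $\mathcal{S}_1,\dots,\mathcal{S}_n$ partitioning $\mathcal{X}\times\mathcal{Y}$, and $\pi:\mathcal{X}\times\mathcal{Y}\to\{1,\dots,n\}$ is the deterministic clustering $\pi(x,y)=j$ iff $(x,y)\in\mathcal{S}_j$. A channel $\gamma$ is congruent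 if for distinct inputs $a\neq a'$ the supports of $\gamma(\cdot|a)$ and $\gamma(\cdot|a')$ are disjoint. *)

From HB Require Import structures.
From mathcomp Require Import all_boot all_order all_algebra.
From mathcomp Require Import all_classical all_reals all_analysis.
Set Implicit Arguments. Unset Strict Implicit. Unset Printing Implicit Defensive.
Import Order.TTheory GRing.Theory Num.Theory.
Import numFieldNormedType.Exports.
Local Open Scope ring_scope.
Local Open Scope classical_set_scope.

Section IIB.
Variable R : realType.

(* A channel (conditional distribution) from A to T := nat:
   k a t = k(t|a), nonnegative, and for each a, sum_t k(t|a) = 1
   (convergent series). *)
Definition is_channel (A : Type) (k : A -> nat -> R) : Prop :=
  (forall a t, 0 <= k a t) /\
  (forall a, series (k a) @ \oo --> (1 : R)).

Definition congruent (A : Type) (g : A -> nat -> R) : Prop :=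
  forall a a', a <> a' -> forall t, g a t = 0 \/ g a' t = 0.

Definition rsum (u : nat -> R) : R := limn (series u).

Variables X Y : finType.

Definition is_distr (r : X * Y -> R) : Prop :=
  (forall z, 0 <= r z) /\ \sum_(z : X * Y) r z = 1.

Definition fully_supported (r : X * Y -> R) : Prop := forall z, 0 < r z.

Definition margX (p : X * Y -> R) (x : X) : R := \sum_(y : Y) p (x, y).
Definition margY (p : X * Y -> R) (y : Y) : R := \sum_(x : X) p (x, y).

Definition prodmarg (p : X * Y -> R) (z : X * Y) : R :=
  margX p z.1 * margY p z.2.

Definition push (k : X * Y -> nat -> R) (r : X * Y -> R) (t : nat) : R :=
  \sum_(z : X * Y) k z t * r z.

(* I(X;Y) (natural log; convention 0 log 0 = 0) *)
Definition mutinfXY (p : X * Y -> R) : R :=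
  \sum_(z : X * Y) p z * ln (p z / prodmarg p z).

Definition mutinfT (p : X * Y -> R) (k : X * Y -> nat -> R) : R :=
  rsum (fun t => \sum_(z : X * Y) p z * k z t * ln (k z t / push k p t)).

Definition KL (a b : nat -> R) : R :=
  rsum (fun t => a t * ln (a t / b t)).

Definition IIB_feasible (p : X * Y -> R) (lam : R) (k : X * Y -> nat -> R) :=
  is_channel k /\ KL (push k p) (push k (prodmarg p)) = lam.

Definition IIB_solution (p : X * Y -> R) (lam : R) (k : X * Y -> nat -> R) :=
  IIB_feasible p lam k /\
  forall k', IIB_feasible p lam k' -> mutinfT p k <= mutinfT p k'.

Definition pmi_ratio (p : X * Y -> R) (z : X * Y) : R := p z / prodmarg p z.

Definition is_class_clustering (p : X * Y -> R) (n : nat)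
    (pi : X * Y -> 'I_n) : Prop :=
  (forall j : 'I_n, exists z, pi z = j) /\
  (forall z z', pi z = pi z' <-> pmi_ratio p z = pmi_ratio p z').

End IIB.

(* For every output t, the log-sum inequality bounds the t-th term of
   D(kappa(p(X,Y)) || kappa(p(X)p(Y))) by
   sum_(x,y) kappa(t|x,y) p(x,y) ln (p(x,y) / p(x)p(y)), and these bounds add up
   to I(X;Y).  The constraint D = I(X;Y) therefore forces equality for every t:
   each output is reached only from inputs sharing one value of
   p(x,y) / p(x)p(y), i.e. from a single class S_j.  For such channels
   I(X,Y;T) = H(pi(X,Y)) + I(X,Y;T | pi(X,Y)), so H(pi(X,Y)) is a lower bound,
   attained exactly when kappa(t|.) is constant on each class; the channels
   gamma(pi) with gamma congruent are feasible and attain it. *)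

From HB Require Import structures.
From mathcomp Require Import all_boot all_order all_algebra.
From mathcomp Require Import all_classical all_reals all_analysis.
From mathcomp Require Import ring.
Set Implicit Arguments. Unset Strict Implicit. Unset Printing Implicit Defensive.
Import Order.TTheory GRing.Theory Num.Theory.
Import numFieldNormedType.Exports.
Local Open Scope ring_scope.
Local Open Scope classical_set_scope.

Section log_sum.
Variable R : realType.

Lemma ler_sum_term (I : finType) (P : pred I) (F : I -> R) i :
  (forall j, P j -> 0 <= F j) -> P i -> F i <= \sum_(j | P j) F j.
Proof.
by move=> F_ge0 Pi; rewrite (bigD1 i) //= lerDl sumr_ge0 // => j /andP[/F_ge0].
Qed.

Lemma ln_leif (x : R) : 0 < x -> ln x <= x - 1 ?= iff (x == 1).
Proof.
move=> x_gt0; apply/leifP; have [->|x_neq1] := eqVneq x 1; first by rewrite ln1 subrr.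
have : ln x != 0 by rewrite ln_eq0.
by move=> /expR_gt1Dx; rewrite lnK ?posrE // ltrBrDl.
Qed.

Lemma gibbs_leif (w v : R) : 0 <= w -> 0 <= v -> (v = 0 -> w = 0) ->
  w - v <= w * ln (w / v) ?= iff (w == v).
Proof.
move=> w_ge0 v_ge0 vw; apply/leifP; have [<-|w_neq_v] := eqVneq w v.
  have [->|w_neq0] := eqVneq w 0; first by rewrite mul0r subrr.
  by rewrite divff // ln1 mulr0 subrr.
have [w0|w_neq0] := eqVneq w 0.
  rewrite w0 mul0r sub0r oppr_lt0 lt_def v_ge0 andbT.
  by apply: contra_neq w_neq_v => v0; rewrite w0 v0.
have w_gt0 : 0 < w by rewrite lt_def w_neq0.
have v_gt0 : 0 < v by rewrite lt_def v_ge0 andbT; apply: contra_neq w_neq0 => /vw.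
have := ln_leif (divr_gt0 v_gt0 w_gt0).
rewrite (can2_eq (divfK w_neq0) (mulfK w_neq0)) mul1r eq_sym (negPf w_neq_v).
move=> /leifP vw_lt.
have : w * ln (v / w) < w * (v / w - 1) by rewrite ltr_pM2l.
rewrite mulrBr mulrCA mulfV // !mulr1 => lt_vw.
have -> : ln (w / v) = - ln (v / w) by rewrite -lnV ?posrE ?divr_gt0 // invf_div.
by rewrite mulrN ltrNr opprB.
Qed.

Lemma log_sum_leif (I : finType) (w v : I -> R) :
    (forall i, 0 <= w i) -> (forall i, 0 <= v i) -> (forall i, v i = 0 -> w i = 0) ->
  (\sum_i w i) * ln ((\sum_i w i) / \sum_i v i) <= \sum_i w i * ln (w i / v i)
    ?= iff [forall i, w i * \sum_j v j == v i * \sum_j w j].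
Proof.
move=> w_ge0 v_ge0 vw; set W := \sum_i w i; set V := \sum_i v i.
have [W0|W_neq0] := eqVneq W 0.
  have w0 i : w i = 0 by apply: (psumr_eq0P _ W0) => // j _.
  apply/leifP; rewrite W0 mul0r big1 => [|i _]; last by rewrite w0 mul0r.
  have -> // : [forall i, w i * V == v i * 0].
  by apply/forallP => i; rewrite w0 mul0r mulr0.
have V_gt0 : 0 < V.
  rewrite lt_def sumr_ge0 // andbT; apply: contra_neq W_neq0 => V0.
  by rewrite /W big1 // => i _; apply/vw/(psumr_eq0P _ V0).
have V_neq0 : V != 0 by rewrite gt_eqF.
have W_gt0 : 0 < W by rewrite lt_def W_neq0 /=; apply: sumr_ge0.
set c := W / V; have c_gt0 : 0 < c by rewrite divr_gt0.
have gibbs_i i : w i - v i * c <= w i * ln (w i / (v i * c)) ?= iff (w i == v i * c).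
  apply: gibbs_leif => //; first by rewrite mulr_ge0 // ltW.
  by move/eqP; rewrite mulf_eq0 (gt_eqF c_gt0) orbF => /eqP/vw.
have split_ln i : w i * ln (w i / (v i * c)) = w i * ln (w i / v i) - w i * ln c.
  have [->|w_neq0] := eqVneq (w i) 0; first by rewrite !mul0r subrr.
  have v_gt0 : 0 < v i by rewrite lt_def v_ge0 andbT; apply: contra_neq w_neq0 => /vw.
  have w_gt0 : 0 < w i by rewrite lt_def w_neq0 w_ge0.
  by rewrite invfM mulrA [ln (_ / c)]ln_div ?posrE ?divr_gt0 // mulrBr.
have := @leif_sum _ _ predT _ _ _ (fun i _ => gibbs_i i).
rewrite (eq_bigr _ (fun i _ => split_ln i)) !sumrB -!mulr_suml -/W -/V.
rewrite [V * c]mulrC divfK // subrr leifBRL add0r.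
have -> // : [forall i, w i * V == v i * W] = [forall (i | predT i), w i == v i * c].
by apply: eq_forallb => i /=; rewrite (can2_eq (mulfK V_neq0) (divfK V_neq0)) mulrA.
Qed.

End log_sum.

Section series_lemmas.
Variable R : realType.
Implicit Types f l u : R ^nat.

Lemma is_cvg_series_sandwich l f u : (forall t, l t <= f t <= u t) ->
  cvgn (series l) -> cvgn (series u) -> cvgn (series f).
Proof.
move=> lfu cvg_l cvg_u; rewrite -(subrK l f); apply: is_cvg_seriesD => //.
apply: (@series_le_cvg _ _ (u - l)); last exact: is_cvg_seriesB.
- by move=> t; rewrite /= subr_ge0; case/andP: (lfu t).
- by move=> t; rewrite /= subr_ge0; case/andP: (lfu t) => /le_trans; apply.
- by move=> t; rewrite /= lerD2r; case/andP: (lfu t).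
Qed.

Lemma series_ge0_lim0 f : (forall t, 0 <= f t) -> cvgn (series f) ->
  limn (series f) = 0 -> forall t, f t = 0.
Proof.
move=> f_ge0 cvg_f lim0 t; apply/eqP; rewrite eq_le f_ge0 andbT.
have := nondecreasing_cvgn_le (nondecreasing_series (fun k _ _ => f_ge0 k)) cvg_f t.+1.
rewrite lim0 big_nat_recr //=; apply: le_trans; rewrite lerDr.
by apply: sumr_ge0 => k _.
Qed.

End series_lemmas.

Lemma is_channel_comp (R : realType) (A B : Type) (f : A -> B) (g : B -> nat -> R) :
  is_channel g -> is_channel (fun a => g (f a)).
Proof. by case=> g_ge0 g_sum1; split=> [a t|a]; [exact: g_ge0 | exact: g_sum1]. Qed.

Lemma is_channel_indicator (R : realType) (A : Type) (f : A -> nat) :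
  is_channel (fun a t => (t == f a)%:R : R).
Proof.
split=> [a t|a]; first exact: ler0n.
apply: cvg_near_cst; exists (f a).+1 => // N /= aN.
rewrite /series /= (bigD1_seq (f a)) ?mem_index_iota ?iota_uniq //= eqxx.
by rewrite big1 ?addr0 // => t /negPf ->; rewrite mulr0n.
Qed.

Lemma congruent_indicator (R : realType) (A : Type) (f : A -> nat) :
  injective f -> congruent (fun a t => (t == f a)%:R : R).
Proof.
move=> f_inj a a' aa' t; have [->|_] := eqVneq t (f a); last by left.
have /negPf -> : f a != f a' by apply/eqP => /f_inj.
by right.
Qed.

Section information_bottleneck.
Variables (R : realType) (X Y : finType) (p : X * Y -> R).
Hypothesis p_gt0 : fully_supported p.
Implicit Types (k : X * Y -> nat -> R) (r : X * Y -> R).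

Local Notation m := (prodmarg p).

Lemma prodmarg_gt0 z : 0 < m z.
Proof.
have p_ge0 z' : 0 <= p z' by exact: ltW.
case: z => x y; rewrite /prodmarg /margX /margY /=.
by apply: mulr_gt0; apply: lt_le_trans (p_gt0 (x, y)) _;
  apply: (ler_sum_term (fun _ _ => p_ge0 _)).
Qed.

Lemma push_ge0 k r t : (forall z, 0 <= k z t) -> (forall z, 0 <= r z) ->
  0 <= push k r t.
Proof. by move=> k_ge0 r_ge0; apply: sumr_ge0 => z _; rewrite mulr_ge0. Qed.

Lemma cvg_series_push k r : is_channel k ->
  series (push k r) @ \oo --> \sum_z r z.
Proof.
case=> _ k_sum1.
have -> : series (push k r) = fun N => \sum_z series (k z) N * r z.
  apply/funext => N; rewrite /series /push /= exchange_big.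
  by apply: eq_bigr => z _; rewrite mulr_suml.
have -> : \sum_z r z = \sum_z 1 * r z by apply: eq_bigr => z _; rewrite mul1r.
apply: cvg_big => [|z _]; first exact: add_continuous.
exact: cvgMr_tmp.
Qed.

Lemma push_prodmarg_eq0 k t : (forall z, 0 <= k z t) -> push k m t = 0 ->
  forall z, k z t = 0.
Proof.
move=> k_ge0 b0 z.
have km_ge0 z' : 0 <= k z' t * m z' by rewrite mulr_ge0 // ltW // prodmarg_gt0.
have /(_ z isT)/eqP := psumr_eq0P (fun z' _ => km_ge0 z') b0.
by rewrite mulf_eq0 (gt_eqF (prodmarg_gt0 z)) orbF => /eqP.
Qed.

Lemma push_kl_leif k t : (forall z, 0 <= k z t) ->
  push k p t * ln (push k p t / push k m t)
    <= push k (fun z => p z * ln (pmi_ratio p z)) t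
    ?= iff [forall z, k z t * p z * push k m t == k z t * m z * push k p t].
Proof.
move=> k_ge0.
have := @log_sum_leif _ _ (fun z => k z t * p z) (fun z => k z t * m z).
rewrite /= -/(push k p t) -/(push k m t).
have -> : \sum_z k z t * p z * ln (k z t * p z / (k z t * m z))
          = push k (fun z => p z * ln (pmi_ratio p z)) t.
  apply: eq_bigr => z _; have [->|kz_neq0] := eqVneq (k z t) 0.
    by rewrite !mul0r.
  by rewrite invfM mulrACA divff // mul1r mulrA.
apply.
- by move=> z; rewrite mulr_ge0 // ltW.
- by move=> z; rewrite mulr_ge0 // ltW // prodmarg_gt0.
- move=> z /eqP; rewrite mulf_eq0 (gt_eqF (prodmarg_gt0 z)) orbF => /eqP ->.
  by rewrite mul0r.
Qed.

Lemma kl_term_ge k t : (forall z, 0 <= k z t) ->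
  push k p t - push k m t <= push k p t * ln (push k p t / push k m t).
Proof.
move=> k_ge0.
have a_ge0 : 0 <= push k p t by apply: push_ge0 => // z; exact: ltW.
have b_ge0 : 0 <= push k m t by apply: push_ge0 => // z; exact/ltW/prodmarg_gt0.
have ba : push k m t = 0 -> push k p t = 0.
  by move=> /(push_prodmarg_eq0 k_ge0) k0; apply: big1 => z _; rewrite k0 mul0r.
exact: gibbs_leif a_ge0 b_ge0 ba.
Qed.

Lemma feasible_pmi_ratio k z t : IIB_feasible p (mutinfXY p) k -> 0 < k z t ->
  pmi_ratio p z = push k p t / push k m t.
Proof.
case=> k_channel KL_eq kz_gt0; have [k_ge0 _] := k_channel.
set kl := fun s => push k p s * ln (push k p s / push k m s).
set c := push k (fun z => p z * ln (pmi_ratio p z)).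
have cvg_c : series c @ \oo --> mutinfXY p by exact: cvg_series_push.
have kl_le_c s : kl s <= c s by exact: push_kl_leif.
have cvg_kl : cvgn (series kl).
  apply: (@is_cvg_series_sandwich _ (push k p - push k m) _ c) => [s||].
  - by rewrite kl_le_c andbT; exact: kl_term_ge.
  - by apply: is_cvg_seriesB; apply/cvgP; exact: cvg_series_push.
  - exact/cvgP/cvg_c.
have kl_eq_c s : kl s = c s.
  apply/eqP; rewrite eq_sym -subr_eq0; apply/eqP; move: s.
  apply: series_ge0_lim0 => [s||]; first by rewrite /= subr_ge0.
    exact: is_cvg_seriesB (cvgP _ cvg_c) cvg_kl.
  rewrite lim_seriesB ?(cvgP _ cvg_c) // (cvg_lim _ cvg_c) //.
  by rewrite -KL_eq subrr.
have := (push_kl_leif (k_ge0^~ t)).2; rewrite -/(kl t) kl_eq_c eqxx.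
move=> /esym/forallP/(_ z)/eqP.
rewrite -[_ * p z * _]mulrA -[_ * m z * _]mulrA => /(mulfI (lt0r_neq0 kz_gt0)) E.
have b_gt0 : 0 < push k m t.
  apply: lt_le_trans (mulr_gt0 kz_gt0 (prodmarg_gt0 z)) _.
  by apply: ler_sum_term => // z' _; rewrite mulr_ge0 // ltW // prodmarg_gt0.
apply/eqP; rewrite /pmi_ratio eqr_div ?lt0r_neq0 ?prodmarg_gt0 //.
by rewrite E mulrC.
Qed.

Variables (n : nat) (pi : X * Y -> 'I_n).

Definition class_sum r z := \sum_(z' | pi z' == pi z) r z'.

Definition class_entropy := \sum_z p z * - ln (class_sum p z).

(* t-th summand of the conditional mutual information I(X,Y;T | pi(X,Y)) *)
Definition cond_info_term k t :=
  \sum_z p z * k z t *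
    ln (k z t * class_sum p z / class_sum (fun z' => k z' t * p z') z).

Lemma class_sum_ge r z : (forall z', 0 <= r z') -> r z <= class_sum r z.
Proof. by move=> r_ge0; apply: ler_sum_term. Qed.

Lemma class_sum_gt0 z : 0 < class_sum p z.
Proof. by apply: lt_le_trans (p_gt0 z) (class_sum_ge _ _) => z'; exact: ltW. Qed.

Lemma eq_class_sum r z z' : pi z = pi z' -> class_sum r z = class_sum r z'.
Proof. by rewrite /class_sum => ->. Qed.

Lemma sum_class_average r :
  \sum_z p z * (class_sum r z / class_sum p z) = \sum_z r z.
Proof.
have -> : \sum_z p z * (class_sum r z / class_sum p z)
    = \sum_z \sum_(z' | pi z' == pi z) p z * (r z' / class_sum p z').
  apply: eq_bigr => z _; rewrite [class_sum r z]/class_sum mulr_suml mulr_sumr.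
  by apply: eq_bigr => z' /eqP /(eq_class_sum p) <-.
rewrite (exchange_big_dep xpredT) //=; apply: eq_bigr => z' _.
rewrite -mulr_suml (eq_bigl (fun z => pi z == pi z')) => [|z]; last exact: eq_sym.
by rewrite mulrCA divff ?mulr1 // lt0r_neq0 // class_sum_gt0.
Qed.

Lemma cond_info_leif k t : (forall z, 0 <= k z t) ->
  0 <= cond_info_term k t
    ?= iff [forall z,
              k z t * class_sum p z == class_sum (fun z' => k z' t * p z') z].
Proof.
move=> k_ge0; set A := class_sum (fun z' => k z' t * p z').
have P_neq0 z : class_sum p z != 0 by rewrite lt0r_neq0 // class_sum_gt0.
have A_ge0 z : 0 <= A z by apply: sumr_ge0 => z' _; rewrite mulr_ge0 // ltW.
have gibbs_z z : p z * k z t - p z * (A z / class_sum p z)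
    <= p z * k z t * ln (p z * k z t / (p z * (A z / class_sum p z)))
    ?= iff (p z * k z t == p z * (A z / class_sum p z)).
  apply: gibbs_leif => [||/eqP].
  - by rewrite mulr_ge0 // ltW.
  - by rewrite mulr_ge0 ?divr_ge0 // ltW ?class_sum_gt0.
  have p_neq0 := lt0r_neq0 (p_gt0 z).
  rewrite mulf_eq0 (negPf p_neq0) mulf_eq0 invr_eq0 (negPf (P_neq0 z)) orbF => /eqP A0.
  have kp_ge0 z' : 0 <= k z' t * p z' by rewrite mulr_ge0 // ltW.
  have /(_ z (eqxx _))/eqP := psumr_eq0P (fun z' _ => kp_ge0 z') A0.
  by rewrite mulf_eq0 (negPf p_neq0) orbF => /eqP ->; rewrite mulr0.
have ratio_z z : p z * k z t * ln (p z * k z t / (p z * (A z / class_sum p z)))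
    = p z * k z t * ln (k z t * class_sum p z / A z).
  have [->|kz_neq0] := eqVneq (k z t) 0; first by rewrite !(mulr0, mul0r).
  by rewrite invfM mulrACA divff ?lt0r_neq0 // mul1r invf_div mulrA.
have := @leif_sum _ _ predT _ _ _ (fun z _ => gibbs_z z).
have sum_pk : \sum_z p z * k z t = \sum_z k z t * p z.
  by apply: eq_bigr => z _; exact: mulrC.
rewrite sumrB sum_class_average sum_pk subrr (eq_bigr _ (fun z _ => ratio_z z)).
have -> // : [forall (z | predT z), p z * k z t == p z * (A z / class_sum p z)]
    = [forall z, k z t * class_sum p z == A z].
apply: eq_forallb => z /=.
rewrite (inj_eq (mulfI (lt0r_neq0 (p_gt0 z)))).
by rewrite (can2_eq (mulfK (P_neq0 z)) (divfK (P_neq0 z))).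
Qed.

Lemma cond_info_le k t : (forall z, 0 <= k z t) ->
  cond_info_term k t <= push k (fun z => p z * ln (class_sum p z / p z)) t.
Proof.
move=> k_ge0; apply: ler_sum => z _.
have [->|kz_neq0] := eqVneq (k z t) 0; first by rewrite !(mulr0, mul0r).
have kz_gt0 : 0 < k z t by rewrite lt_def kz_neq0 k_ge0.
have A_ge : k z t * p z <= class_sum (fun z' => k z' t * p z') z.
  by apply: class_sum_ge => z'; rewrite mulr_ge0 // ltW.
have A_gt0 := lt_le_trans (mulr_gt0 kz_gt0 (p_gt0 z)) A_ge.
rewrite [leRHS]mulrA [k z t * p z]mulrC.
apply: ler_wpM2l; first by rewrite mulr_ge0 // ltW.
rewrite ler_ln ?posrE ?divr_gt0 ?mulr_gt0 ?class_sum_gt0 //.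
rewrite ler_pdivrMr // mulrAC ler_pdivlMr // mulrAC [leRHS]mulrC.
by rewrite ler_wpM2r // ltW // class_sum_gt0.
Qed.

Definition class_supported k :=
  forall t z z', 0 < k z t -> 0 < k z' t -> pi z = pi z'.

Lemma class_sum_push k t z : class_supported k -> (forall z, 0 <= k z t) ->
  0 < k z t -> class_sum (fun z' => k z' t * p z') z = push k p t.
Proof.
move=> k_cls k_ge0 kz_gt0.
rewrite /class_sum /push [RHS](bigID (fun z' => pi z' == pi z)) /=.
rewrite [X in _ = _ + X]big1 ?addr0 // => z' /negP zz'.
have [->|kz'_neq0] := eqVneq (k z' t) 0; first by rewrite mul0r.
by exfalso; apply/zz'/eqP/(k_cls t) => //; rewrite lt_def kz'_neq0 k_ge0.
Qed.

Lemma mutinfT_term_split k t : class_supported k -> (forall z, 0 <= k z t) ->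
  \sum_z p z * k z t * ln (k z t / push k p t)
    = push k (fun z => p z * - ln (class_sum p z)) t + cond_info_term k t.
Proof.
move=> k_cls k_ge0; rewrite /cond_info_term [X in _ = X + _]/push -big_split /=.
apply: eq_bigr => z _; have [->|kz_neq0] := eqVneq (k z t) 0.
  by rewrite !(mulr0, mul0r) addr0.
have kz_gt0 : 0 < k z t by rewrite lt_def kz_neq0 k_ge0.
have A_eq := class_sum_push k_cls k_ge0 kz_gt0.
have a_gt0 : 0 < push k p t.
  rewrite -A_eq; apply: lt_le_trans (mulr_gt0 kz_gt0 (p_gt0 z)) _.
  by apply: class_sum_ge => z'; rewrite mulr_ge0 // ltW.
rewrite A_eq.
have -> : k z t * class_sum p z / push k p t = k z t / push k p t * class_sum p z.
  by rewrite mulrAC.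
by rewrite [ln (_ * class_sum p z)]lnM ?posrE ?divr_gt0 ?class_sum_gt0 //; ring.
Qed.

Section class_supported_channel.
Variable k : X * Y -> nat -> R.
Hypotheses (k_channel : is_channel k) (k_cls : class_supported k).

Let k_ge0 : forall z t, 0 <= k z t := k_channel.1.

Lemma is_cvg_series_cond_info : cvgn (series (cond_info_term k)).
Proof.
apply: (@series_le_cvg _ _ (push k (fun z => p z * ln (class_sum p z / p z)))).
- by move=> t; exact: cond_info_leif.
- move=> t; apply: push_ge0 => // z; apply: mulr_ge0; first exact: ltW.
  apply: ln_ge0; rewrite ler_pdivlMr // mul1r.
  by apply: class_sum_ge => z'; exact: ltW.
- by move=> t; exact: cond_info_le.
- exact/cvgP/cvg_series_push.
Qed.

Lemma mutinfT_class_split :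
  mutinfT p k = class_entropy + limn (series (cond_info_term k)).
Proof.
rewrite /mutinfT /rsum.
have -> : (fun t => \sum_z p z * k z t * ln (k z t / push k p t))
    = push k (fun z => p z * - ln (class_sum p z)) + cond_info_term k.
  by apply/funext => t; rewrite mutinfT_term_split //; exact: k_ge0.
have cvg_c := cvg_series_push (r := fun z => p z * - ln (class_sum p z)) k_channel.
rewrite lim_seriesD; [|exact: (cvgP _ cvg_c)|exact: is_cvg_series_cond_info].
by rewrite (cvg_lim _ cvg_c).
Qed.

Lemma class_entropy_le_mutinfT : class_entropy <= mutinfT p k.
Proof.
rewrite mutinfT_class_split lerDl; apply: limr_ge is_cvg_series_cond_info _.
by apply: nearW => N; apply: sumr_ge0 => t _; exact: cond_info_leif.
Qed.

Lemma mutinfT_eq_class_entropy :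
  mutinfT p k = class_entropy <-> forall t z z', pi z = pi z' -> k z t = k z' t.
Proof.
have P_neq0 z : class_sum p z != 0 by rewrite lt0r_neq0 // class_sum_gt0.
rewrite mutinfT_class_split -{2}[class_entropy]addr0.
split=> [/addrI lim0 t z z' zz'|k_const].
  have := eq_leif (cond_info_leif (k_ge0^~ t)).
  rewrite (series_ge0_lim0 _ is_cvg_series_cond_info lim0) ?eqxx;
    last by move=> s; exact: cond_info_leif.
  move=> /esym/forallP cond.
  have kE w : k w t = class_sum (fun z' => k z' t * p z') w / class_sum p w.
    by apply/eqP; rewrite -(can2_eq (mulfK (P_neq0 w)) (divfK (P_neq0 w))); exact: cond.
  by rewrite !kE (eq_class_sum _ zz') (eq_class_sum p zz').
have gap0 t : cond_info_term k t = 0.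
  apply/esym/eqP; rewrite (eq_leif (cond_info_leif (k_ge0^~ t))); apply/forallP => z.
  rewrite /class_sum mulr_sumr; apply/eqP/eq_bigr => z' /eqP zz'.
  by rewrite (k_const t z z' (esym zz')) mulrC.
have -> : series (cond_info_term k) = fun=> 0.
  by apply/funext => N; rewrite /series /= big1 // => t _; exact: gap0.
by rewrite lim_cst.
Qed.

End class_supported_channel.

Lemma congruent_class_supported g :
  congruent g -> class_supported (fun z t => g (pi z) t).
Proof.
move=> g_cong t z z' gz gz'; have [//|zz'] := eqVneq (pi z) (pi z').
by case: (g_cong _ _ (elimN eqP zz') t) => g0; [move: gz | move: gz']; rewrite g0 ltxx.
Qed.

Lemma push_congruent g r t z : congruent g -> g (pi z) t != 0 ->
  push (fun z t => g (pi z) t) r t = g (pi z) t * class_sum r z.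
Proof.
move=> g_cong gz_neq0; rewrite /push /class_sum mulr_sumr [RHS]big_mkcond /=.
apply: eq_bigr => z' _; case: ifP => [/eqP -> //|/negbT zz'].
case: (g_cong _ _ (elimN eqP zz') t) => g0; first by rewrite g0 mul0r.
by move: gz_neq0; rewrite g0 eqxx.
Qed.

Lemma congruent_section k (s : 'I_n -> X * Y) : (forall z t, 0 <= k z t) ->
  class_supported k -> cancel s pi -> congruent (fun j => k (s j)).
Proof.
move=> k_ge0 k_cls sK j j' jj' t.
have [|kj_neq0] := eqVneq (k (s j) t) 0; [by left | right].
have [//|kj'_neq0] := eqVneq (k (s j') t) 0; exfalso; apply: jj'.
by rewrite -[j]sK -[j']sK; apply: (k_cls t); rewrite lt_def ?kj_neq0 ?kj'_neq0 k_ge0.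
Qed.

Lemma congruent_mutinfT g : is_channel g -> congruent g ->
  mutinfT p (fun z t => g (pi z) t) = class_entropy.
Proof.
move=> g_channel g_cong; have g_cls := congruent_class_supported g_cong.
by apply/(mutinfT_eq_class_entropy (is_channel_comp pi g_channel) g_cls) => t z z' ->.
Qed.

Hypothesis pi_classes : forall z z', pi z = pi z' <-> pmi_ratio p z = pmi_ratio p z'.

Lemma feasible_class_supported k :
  IIB_feasible p (mutinfXY p) k -> class_supported k.
Proof.
move=> k_feas t z z' kz kz'; apply/pi_classes.
by rewrite (feasible_pmi_ratio k_feas kz) (feasible_pmi_ratio k_feas kz').
Qed.

Lemma class_sum_pmi z : class_sum p z = pmi_ratio p z * class_sum m z.
Proof.
rewrite /class_sum mulr_sumr; apply: eq_bigr => z' /eqP /pi_classes <-.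
by rewrite /pmi_ratio divfK // lt0r_neq0 // prodmarg_gt0.
Qed.

Lemma congruent_feasible g : is_channel g -> congruent g ->
  IIB_feasible p (mutinfXY p) (fun z t => g (pi z) t).
Proof.
move=> g_channel g_cong; set k := fun z t => g (pi z) t.
have k_channel : is_channel k := is_channel_comp pi g_channel.
split=> //; rewrite /KL /rsum.
have -> : (fun t => push k p t * ln (push k p t / push k m t))
    = push k (fun z => p z * ln (pmi_ratio p z)).
  apply/funext => t; apply/eqP; rewrite (eq_leif (push_kl_leif (k_channel.1^~ t))).
  apply/forallP => z; have [->|gz_neq0] := eqVneq (k z t) 0; first by rewrite !mul0r.
  rewrite !(push_congruent _ g_cong gz_neq0) class_sum_pmi.
  have -> : p z = pmi_ratio p z * m z.
    by rewrite /pmi_ratio divfK // lt0r_neq0 // prodmarg_gt0.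
  by apply/eqP; ring.
exact: cvg_lim _ (cvg_series_push k_channel).
Qed.

End information_bottleneck.

Theorem corollary9 (R : realType) (X Y : finType) (p : X * Y -> R)
    (n : nat) (pi : X * Y -> 'I_n) :
  is_distr p -> fully_supported p ->
  is_class_clustering p pi ->
  forall k : X * Y -> nat -> R,
    IIB_solution p (mutinfXY p) k <->
    exists g : 'I_n -> nat -> R,
      is_channel g /\ congruent g /\ forall z t, k z t = g (pi z) t.
Proof.
move=> _ p_gt0 [pi_onto pi_classes] k.
have [ind_channel ind_cong] : is_channel (fun (j : 'I_n) t => (t == j)%:R : R)
    /\ congruent (fun (j : 'I_n) t => (t == j)%:R : R).
  by split; [exact: is_channel_indicator | apply: congruent_indicator; exact: val_inj].
split => [[k_feas k_min]|[g [g_channel [g_cong k_g]]]].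
  have k_cls := feasible_class_supported p_gt0 pi_classes k_feas.
  have k_channel := k_feas.1.
  have k_const : forall t z z', pi z = pi z' -> k z t = k z' t.
    apply/(mutinfT_eq_class_entropy p_gt0 k_channel k_cls)/eqP.
    rewrite eq_le class_entropy_le_mutinfT // andbT.
    rewrite -(congruent_mutinfT p_gt0 pi ind_channel ind_cong).
    exact/k_min/(congruent_feasible p_gt0 pi_classes ind_channel ind_cong).
  have [s sK] := choice pi_onto.
  exists (fun j => k (s j)); split; first exact: is_channel_comp.
  split; first exact: congruent_section k_channel.1 k_cls sK.
  by move=> z t; apply: k_const; rewrite sK.
have -> : k = (fun z t => g (pi z) t).
  by apply/funext => z; apply/funext => t; exact: k_g.
split; first exact: (congruent_feasible p_gt0 pi_classes).
move=> k' k'_feas; rewrite (congruent_mutinfT p_gt0 pi g_channel g_cong).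
have k'_cls := feasible_class_supported p_gt0 pi_classes k'_feas.
exact: class_entropy_le_mutinfT k'_feas.1 k'_cls.
Qed.
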